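(* Let $(\mathcal{A},\mu,\alpha)$ be a multiplicative Hom-alternative superalgebra. Then the $n$th derived Hom-superalgebra $\mathcal{A}^{n}=(\mathcal{A},\mu^{(n)}=\alpha^{2^{n}-1}\circ\mu,\alpha^{2^{n}})$ is also a multiplicative Hom-alternative superalgebra for each $n\geq0$.
   Context: $\mathcal{A}=\mathcal{A}_0\oplus\mathcal{A}_1$ is a $\mathbb{Z}_2$-graded vector space over an algebraically closed field $\mathbb{K}$ of characteristic $0$; $|x|$ is the parity of homogeneous $x$; even maps preserve parity. For even bilinear $\mu$ and even linear $\alpha$, $\widetilde{as}(x,y,z)=\mu(\mu(x,y),\alpha(z))-\mu(\alpha(x),\mu(y,z))$. A Hom-alternative superalgebra is a triple $(\mathcal{A},\mu,\alpha)$ with $\widetilde{as}(x,y,z)+(-1)^{|x||y|}\widetilde{as}(y,x,z)=0$ and $\widetilde{as}(x,y,z)+(-1)^{|y||z|}\widetilde{as}(x,z,y)=0$ for all homogeneous $x,y,z$; it is multiplicative if $\alpha\circ\mu=\mu\circ(\alpha\otimes\alpha)$. *)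

From mathcomp Require Import all_boot all_algebra.
Set Implicit Arguments. Unset Strict Implicit. Unset Printing Implicit Defensive.
Import GRing.Theory.
Local Open Scope ring_scope.

(* A Z_2-graded vector space A = A_0 (+) A_1 over K is modelled as the
   product A0 * A1 of two K-vector spaces (lmodTypes); an element x is
   homogeneous of parity b (false = 0, true = 1) when its component in the
   other summand vanishes. *)
Definition homog (K : fieldType) (A0 A1 : lmodType K) (b : bool) (x : A0 * A1) : Prop :=
  if b then x.1 = 0 else x.2 = 0.

Section Defs.
Variables (K : fieldType) (A0 A1 : lmodType K).
Local Notation A := (A0 * A1)%type.

Definition is_bilinear (mu : A -> A -> A) : Prop :=
  (forall (a : K) x y z, mu (a *: x + y) z = a *: mu x z + mu y z) /\
  (forall (a : K) x y z, mu x (a *: y + z) = a *: mu x y + mu x z).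

Definition is_linear_map (f : A -> A) : Prop :=
  forall (a : K) x y, f (a *: x + y) = a *: f x + f y.

Definition even_bilinear (mu : A -> A -> A) : Prop :=
  is_bilinear mu /\
  forall (i j : bool) x y, homog i x -> homog j y -> homog (i (+) j) (mu x y).

Definition even_linear (f : A -> A) : Prop :=
  is_linear_map f /\ forall (i : bool) x, homog i x -> homog i (f x).

Definition ssign (i j : bool) : K := (-1) ^+ (i && j).

Definition hom_assoc (mu : A -> A -> A) (alpha : A -> A) (x y z : A) : A :=
  mu (mu x y) (alpha z) - mu (alpha x) (mu y z).

Definition HomAlternativeSuperalgebra (mu : A -> A -> A) (alpha : A -> A) : Prop :=
  [/\ even_bilinear mu, even_linear alpha &
   forall (i j k : bool) x y z, homog i x -> homog j y -> homog k z ->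
     hom_assoc mu alpha x y z + ssign i j *: hom_assoc mu alpha y x z = 0 /\
     hom_assoc mu alpha x y z + ssign j k *: hom_assoc mu alpha x z y = 0].

Definition multiplicative (mu : A -> A -> A) (alpha : A -> A) : Prop :=
  forall x y, alpha (mu x y) = mu (alpha x) (alpha y).

Definition derived_mul (mu : A -> A -> A) (alpha : A -> A) (n : nat) : A -> A -> A :=
  fun x y => iter (2 ^ n - 1) alpha (mu x y).

Definition derived_twist (alpha : A -> A) (n : nat) : A -> A :=
  iter (2 ^ n) alpha.

End Defs.

(* Twisting principle: if beta is an even linear map that is multiplicative
   for mu and commutes with alpha, then the Hom-associator of
   (beta o mu, beta o alpha) is beta^2 applied to the Hom-associator of
   (mu, alpha), so both super-alternativity identities, as well as
   multiplicativity, carry over.  The n-th derived Hom-superalgebra is the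
   twist by beta = alpha^(2^n - 1), since alpha^(2^n) = alpha^(2^n - 1) o alpha. *)

From Pilot Require Import Defs.
From mathcomp Require Import all_boot all_algebra.
Set Implicit Arguments. Unset Strict Implicit. Unset Printing Implicit Defensive.
Local Open Scope ring_scope.

Section HomAlternativeTwist.
Import GRing.Theory.
Variables (K : fieldType) (A0 A1 : lmodType K).
Local Notation A := (A0 * A1)%type.
(* [GRing.Theory] exports a homonymous (deprecated) [multiplicative]. *)
Local Notation multiplicative := Defs.multiplicative.
Implicit Types (f g alpha beta : A -> A) (mu : A -> A -> A).

Section LinearMap.
Variable f : A -> A.
Hypothesis f_lin : is_linear_map f.

Lemma linear_map0 : f 0 = 0.
Proof. by have := f_lin (-1) 0 0; rewrite scaler0 addr0 scaleN1r addNr. Qed.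

Lemma linear_mapD x y : f (x + y) = f x + f y.
Proof. by have := f_lin 1 x y; rewrite !scale1r. Qed.

Lemma linear_mapZ a x : f (a *: x) = a *: f x.
Proof. by have := f_lin a x 0; rewrite !addr0 linear_map0 addr0. Qed.

Lemma linear_mapB x y : f (x - y) = f x - f y.
Proof. by rewrite linear_mapD -scaleN1r linear_mapZ scaleN1r. Qed.

End LinearMap.

Lemma even_linear_comp f g : even_linear f -> even_linear g -> even_linear (f \o g).
Proof.
move=> [f_lin f_hom] [g_lin g_hom]; split=> [a x y | i x hx] /=.
  by rewrite g_lin f_lin.
exact/f_hom/g_hom.
Qed.

Lemma even_linear_iter f k : even_linear f -> even_linear (iter k f).
Proof.
move=> f_even; elim: k => [|k IHk]; first by split=> // i x.
exact: even_linear_comp.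
Qed.

Lemma even_bilinear_comp f mu :
  even_linear f -> even_bilinear mu -> even_bilinear (fun x y => f (mu x y)).
Proof.
move=> [f_lin f_hom] [[mu_linl mu_linr] mu_hom].
split; first by split=> a x y z; rewrite ?mu_linl ?mu_linr f_lin.
by move=> i j x y hx hy; exact/f_hom/mu_hom.
Qed.

Lemma multiplicative_iter mu f k : multiplicative mu f -> multiplicative mu (iter k f).
Proof. by move=> f_mult x y; elim: k => [|k IHk] //=; rewrite IHk f_mult. Qed.

Lemma eq_HomAlternativeSuperalgebra mu alpha alpha' :
  alpha =1 alpha' -> HomAlternativeSuperalgebra mu alpha ->
  HomAlternativeSuperalgebra mu alpha'.
Proof.
move=> eq_alpha [mu_even [alpha_lin alpha_hom] alt]; split=> //.
  by split=> [a x y | i x]; rewrite -!eq_alpha; [exact: alpha_lin | exact: alpha_hom].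
by move=> i j k x y z; rewrite /hom_assoc -!eq_alpha; exact: alt.
Qed.

Lemma eq_multiplicative mu alpha alpha' :
  alpha =1 alpha' -> multiplicative mu alpha -> multiplicative mu alpha'.
Proof. by move=> eq_alpha alpha_mult x y; rewrite -!eq_alpha. Qed.

Section Twist.
Variables (mu : A -> A -> A) (alpha beta : A -> A).
Hypotheses (beta_even : even_linear beta) (beta_mult : multiplicative mu beta).
Hypothesis beta_alpha : forall x, beta (alpha x) = alpha (beta x).
Local Notation twist_mul := (fun x y => beta (mu x y)).

Lemma hom_assoc_twist x y z :
  hom_assoc twist_mul (beta \o alpha) x y z = beta (beta (hom_assoc mu alpha x y z)).
Proof. by rewrite /hom_assoc /= -!beta_mult !(linear_mapB beta_even.1). Qed.

Lemma HomAlternativeSuperalgebra_twist :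
  HomAlternativeSuperalgebra mu alpha ->
  HomAlternativeSuperalgebra twist_mul (beta \o alpha).
Proof.
have beta_lin := beta_even.1.
move=> [mu_even alpha_even alt]; split.
- exact: even_bilinear_comp.
- exact: even_linear_comp.
move=> i j k x y z hx hy hz; have [alt_l alt_r] := alt i j k x y z hx hy hz.
rewrite !hom_assoc_twist -!(linear_mapZ beta_lin) -!(linear_mapD beta_lin).
by rewrite alt_l alt_r !(linear_map0 beta_lin).
Qed.

Lemma multiplicative_twist :
  multiplicative mu alpha -> multiplicative twist_mul (beta \o alpha).
Proof. by move=> alpha_mult x y /=; rewrite -beta_mult -alpha_mult -beta_alpha. Qed.

End Twist.
End HomAlternativeTwist.

Theorem mainTheorem12 (K : closedFieldType) (hK : [pchar K] =i pred0)
  (A0 A1 : lmodType K) (mu : A0 * A1 -> A0 * A1 -> A0 * A1) (alpha : A0 * A1 -> A0 * A1) :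
  HomAlternativeSuperalgebra mu alpha -> multiplicative mu alpha ->
  forall n : nat,
    HomAlternativeSuperalgebra (derived_mul mu alpha n) (derived_twist alpha n) /\
    multiplicative (derived_mul mu alpha n) (derived_twist alpha n).
Proof.
move=> hA alpha_mult n; have [_ alpha_even _] := hA.
set beta := iter (2 ^ n - 1) alpha.
have twistE : beta \o alpha =1 derived_twist alpha n.
  by move=> x; rewrite /= /beta -iterSr subn1 prednK ?expn_gt0.
have beta_even : even_linear beta by exact: even_linear_iter.
have beta_mult : multiplicative mu beta by exact: multiplicative_iter.
have beta_alpha x : beta (alpha x) = alpha (beta x) by rewrite /beta -iterSr iterS.
split.
- apply: eq_HomAlternativeSuperalgebra twistE _.
  exact: HomAlternativeSuperalgebra_twist.
- apply: eq_multiplicative twistE _.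
  exact: multiplicative_twist.
Qed.
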